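(* Let $\mathcal A\subseteq 2^\omega$ be a class of Turing degrees, i.e. $X\in\mathcal A$ and $Y\equiv_T X$ imply $Y\in\mathcal A$. Let $D_T(\mathcal A)=\{Y\in 2^\omega:\exists X\in\mathcal A\,(Y\le_T X)\}$ and $U_T(\mathcal A)=\{Y\in 2^\omega:\exists X\in\mathcal A\,(X\le_T Y)\}$. Then $\dim_H(\mathcal A)=\dim_H(D_T(\mathcal A))$ and $\dim_H(\mathcal A)\le \dim_H(U_T(\mathcal A))$. The same two statements hold when Turing reducibility $\le_T$ and Turing equivalence $\equiv_T$ are replaced everywhere by hyperarithmetic reducibility $\le_h$ and hyperarithmetic equivalence $\equiv_h$.
   Context: $\dim_H$ denotes the (classical) Hausdorff dimension of a subset of Cantor space $2^\omega$ with respect to the standard metric (equivalently, by Lutz's characterization, the infimum of rationals $s\in[0,1]$ such that some supermartingale $d$ satisfies $\limsup_n d(X\upharpoonright n)/2^{(1-s)n}=\infty$ for all $X$ in the class). *)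

From HB Require Import structures.
From mathcomp Require Import all_boot all_order all_algebra.
From mathcomp Require Import all_classical all_reals.
From mathcomp Require Import exp Rstruct.
Set Implicit Arguments. Unset Strict Implicit. Unset Printing Implicit Defensive.
Import Order.TTheory GRing.Theory Num.Theory.

(* Arguments are passed as a list of naturals; missing arguments read as 0.
   [OrA] queries oracle A, [OrB] queries oracle B, at the first argument. *)
Inductive prf : Type :=
| PZero | PSucc | PProj (i : nat) | POrA | POrB
| PComp (f : prf) (gs : list prf)
| PPrim (b s : prf)
| PMin (f : prf).

Inductive eval (A B : nat -> nat) : prf -> list nat -> nat -> Prop :=
| eZero v : eval A B PZero v 0
| eSucc v : eval A B PSucc v (head 0 v).+1
| eProj i v : eval A B (PProj i) v (nth 0 v i)
| eOrA v : eval A B POrA v (A (head 0 v))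
| eOrB v : eval A B POrB v (B (head 0 v))
| eComp f gs v ws y :
    evals A B gs v ws -> eval A B f ws y -> eval A B (PComp f gs) v y
| ePrim0 b s v y : eval A B b v y -> eval A B (PPrim b s) (0 :: v) y
| ePrimS b s n v z y :
    eval A B (PPrim b s) (n :: v) z -> eval A B s (n :: z :: v) y ->
    eval A B (PPrim b s) (n.+1 :: v) y
| eMin f v n :
    eval A B f (n :: v) 0 ->
    (forall m, m < n -> exists k, eval A B f (m :: v) k.+1) ->
    eval A B (PMin f) v n
with evals (A B : nat -> nat) : list prf -> list nat -> list nat -> Prop :=
| esNil v : evals A B [::] v [::]
| esCons g gs v y ys :
    eval A B g v y -> evals A B gs v ys -> evals A B (g :: gs) v (y :: ys).

Definition cantor := nat -> bool.
Definition b2n (X : cantor) : nat -> nat := fun n => nat_of_bool (X n).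

Definition turing_le (X Y : cantor) : Prop :=
  exists e : prf, forall n, eval (b2n Y) (fun _ => 0) e [:: n] (b2n X n).
Definition turing_eq (X Y : cantor) : Prop := turing_le X Y /\ turing_le Y X.

(** Pi^1_1(Y) subsets of nat, via the normal form
    n \in S  <->  forall f in omega^omega, Phi_e^{Y (+) f}(n) halts. *)
Definition Pi11 (Y : cantor) (S : nat -> Prop) : Prop :=
  exists e : prf, forall n,
    S n <-> forall f : nat -> nat, exists y, eval (b2n Y) f e [:: n] y.

(** Hyperarithmetic reducibility: X <=_h Y iff X is Delta^1_1(Y)
    (Kleene: equivalently, X is hyperarithmetic in Y). *)
Definition hyp_le (X Y : cantor) : Prop :=
  Pi11 Y (fun n => X n = true) /\ Pi11 Y (fun n => X n = false).
Definition hyp_eq (X Y : cantor) : Prop := hyp_le X Y /\ hyp_le Y X.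

Definition closed_under (eqv : cantor -> cantor -> Prop) (A : set cantor) :=
  forall X Y, A X -> eqv Y X -> A Y.
Definition down_closure (le : cantor -> cantor -> Prop) (A : set cantor) : set cantor :=
  fun Y => exists X, A X /\ le Y X.
Definition up_closure (le : cantor -> cantor -> Prop) (A : set cantor) : set cantor :=
  fun Y => exists X, A X /\ le X Y.

(** Hausdorff dimension on Cantor space (metric d(X,Y) = 2^-min{i | X i <> Y i}). *)
Local Open Scope ring_scope.

Definition cyl (s : seq bool) : set cantor :=
  fun X => forall i, (i < size s)%N -> X i = nth false s i.

(* weight of a covering set: diam^s = 2^(-s |sigma|); None = unused slot *)
Definition cweight (s : Rdefinitions.R) (o : option (seq bool)) : Rdefinitions.R :=
  match o with
  | Some sig => (2 : Rdefinitions.R) `^ (- (s * (size sig)%:R))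
  | None => 0
  end.

Definition Hnull (s : Rdefinitions.R) (A : set cantor) : Prop :=
  forall (n : nat) (eps : Rdefinitions.R), 0 < eps ->
    exists c : nat -> option (seq bool),
      (forall i sig, c i = Some sig -> (n <= size sig)%N) /\
      (forall X, A X -> exists i sig, c i = Some sig /\ cyl sig X) /\
      (forall N : nat, \sum_(i < N) cweight s (c i) <= eps).

Definition dimH (A : set cantor) : Rdefinitions.R :=
  inf [set s : Rdefinitions.R | 0 <= s /\ Hnull s A].

(* If [Y <=_T X], the join [Z] that copies [X k] to position [k * k] and keeps [Y]
   elsewhere is Turing equivalent to [X]; the same holds for [<=_h], since the
   [Pi^1_1(X)] sets are closed under case distinction on a computable predicate.
   So every member of the downward closure of a degree-closed class [A] agrees
   with a member of [A] off the squares. Changing bits on a set of density zero does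
   not raise Hausdorff dimension: a covering cylinder of length [l] splits into
   [2 ^ o(l)] cylinders of the same length, which costs an arbitrarily small increase
   of the exponent. The other inequalities are monotonicity of [dimH]. *)

From Stdlib Require Import PeanoNat Lia.
From mathcomp Require Import all_boot all_order all_algebra.
From mathcomp Require Import all_classical all_reals.
From mathcomp Require Import exp Rstruct.
From mathcomp Require Import zify lra.
Import Order.TTheory GRing.Theory Num.Theory.

Set Implicit Arguments.
Unset Strict Implicit.
Unset Printing Implicit Defensive.

(** * Oracle computations *)

Section PrfNestedInd.
Variable P : prf -> Prop.
Hypotheses (HZero : P PZero) (HSucc : P PSucc) (HProj : forall i, P (PProj i))
  (HOrA : P POrA) (HOrB : P POrB)
  (HComp : forall f gs, P f -> List.Forall P gs -> P (PComp f gs))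
  (HPrim : forall b s, P b -> P s -> P (PPrim b s))
  (HMin : forall f, P f -> P (PMin f)).

(* The generated induction principle of [prf] has no hypotheses for the argument
   programs [gs] of [PComp f gs]. *)
Fixpoint prf_nested_ind (e : prf) : P e :=
  match e with
  | PZero => HZero | PSucc => HSucc | PProj i => HProj i
  | POrA => HOrA | POrB => HOrB
  | PComp f gs => HComp (prf_nested_ind f)
      ((fix all_ind (l : list prf) : List.Forall P l :=
          if l is g :: l' then List.Forall_cons g (prf_nested_ind g) (all_ind l')
          else List.Forall_nil P) gs)
  | PPrim b s => HPrim (prf_nested_ind b) (prf_nested_ind s)
  | PMin f => HMin (prf_nested_ind f)
  end.
End PrfNestedInd.

Lemma eval_det A B e v y y' : eval A B e v y -> eval A B e v y' -> y = y'.
Proof.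
elim/prf_nested_ind: e v y y' => [||i|||f gs IHf IHgs|b s IHb IHs|f IHf] v y y' H1 H2.
1-5: by inversion H1; inversion H2.
- inversion H1 as [| | | | |f1 gs1 v1 ws1 y1 Hgs1 Hf1| | |]; subst.
  inversion H2 as [| | | | |f2 gs2 v2 ws2 y2 Hgs2 Hf2| | |]; subst.
  suff Ews : ws1 = ws2 by subst; exact: IHf Hf1 Hf2.
  clear Hf1 Hf2; elim: IHgs ws1 ws2 Hgs1 Hgs2 => [|g l IHg _ IHl] ws1 ws2 Hl1 Hl2.
    by inversion Hl1; inversion Hl2.
  inversion Hl1 as [|g1 l1 u1 z1 zs1 Hg1 Hs1]; inversion Hl2 as [|g2 l2 u2 z2 zs2 Hg2 Hs2].
  by rewrite (IHg _ _ _ Hg1 Hg2) (IHl _ _ Hs1 Hs2).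
- case: v H1 H2 => [|n v] H1 H2; first by inversion H1.
  elim: n y y' H1 H2 => [|n IHn] y y' H1 H2.
    inversion H1 as [| | | | | |b1 s1 v1 y1 Hb1| |]; subst.
    inversion H2 as [| | | | | |b2 s2 v2 y2 Hb2| |]; subst.
    exact: IHb Hb1 Hb2.
  inversion H1 as [| | | | | | |b1 s1 n1 v1 z1 y1 Hr1 Hs1|]; subst.
  inversion H2 as [| | | | | | |b2 s2 n2 v2 z2 y2 Hr2 Hs2|]; subst.
  have Ez := IHn _ _ Hr1 Hr2; subst; exact: IHs Hs1 Hs2.
- inversion H1 as [| | | | | | | |f1 v1 n1 Hf1 Hlt1]; subst.
  inversion H2 as [| | | | | | | |f2 v2 n2 Hf2 Hlt2]; subst.
  case: (ltngtP y y') => // [/Hlt2|/Hlt1] [k Hk].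
  + by have := IHf _ _ _ Hf1 Hk.
  + by have := IHf _ _ _ Hf2 Hk.
Qed.

Section Programs.
Variables A B : nat -> nat.

Lemma eval_proj i v y : y = nth 0 v i -> eval A B (PProj i) v y.
Proof. by move->; constructor. Qed.

Lemma eval_comp1 f g v w y :
  eval A B g v w -> eval A B f [:: w] y -> eval A B (PComp f [:: g]) v y.
Proof. by move=> Hg Hf; econstructor; last exact: Hf; repeat constructor. Qed.

Lemma eval_comp2 f g1 g2 v w1 w2 y :
  eval A B g1 v w1 -> eval A B g2 v w2 -> eval A B f [:: w1; w2] y ->
  eval A B (PComp f [:: g1; g2]) v y.
Proof. by move=> Hg1 Hg2 Hf; econstructor; last exact: Hf; repeat constructor. Qed.

Lemma eval_comp1_inv f g v y : eval A B (PComp f [:: g]) v y ->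
  exists w, eval A B g v w /\ eval A B f [:: w] y.
Proof.
move=> H; inversion H as [| | | | |f1 gs1 v1 ws1 y1 Hgs Hf| | |]; subst.
inversion Hgs as [|g2 l2 v2 w ws Hg Hnil]; subst.
by inversion Hnil; subst; exists w.
Qed.

Lemma eval_comp2_inv f g1 g2 v y : eval A B (PComp f [:: g1; g2]) v y ->
  exists w1 w2, [/\ eval A B g1 v w1, eval A B g2 v w2 & eval A B f [:: w1; w2] y].
Proof.
move=> H; inversion H as [| | | | |f1 gs1 v1 ws1 y1 Hgs Hf| | |]; subst.
inversion Hgs as [|g3 l3 v3 w1 ws Hg1 Hgs']; subst.
inversion Hgs' as [|g4 l4 v4 w2 ws' Hg2 Hnil]; subst.
by inversion Hnil; subst; exists w1, w2.
Qed.

Definition POne := PComp PSucc [:: PZero].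
Definition PAdd := PPrim (PProj 0) (PComp PSucc [:: PProj 1]).
Definition PMul := PPrim PZero (PComp PAdd [:: PProj 1; PProj 2]).
Definition PPred := PPrim PZero (PProj 0).
(* Primitive recursion runs on the first argument, so the subtrahend comes first. *)
Definition PSubRev := PPrim (PProj 0) (PComp PPred [:: PProj 1]).
Definition PSub := PComp PSubRev [:: PProj 1; PProj 0].

Lemma eval_one v : eval A B POne v 1.
Proof. by apply: eval_comp1; constructor. Qed.

Lemma eval_add a b : eval A B PAdd [:: a; b] (a + b).
Proof.
elim: a => [|a IH]; first by apply: ePrim0; apply: eval_proj.
apply: ePrimS IH _; apply: eval_comp1; [exact: eval_proj | constructor].
Qed.

Lemma eval_mul a b : eval A B PMul [:: a; b] (a * b).
Proof.
elim: a => [|a IH]; first by apply: ePrim0; constructor.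
apply: ePrimS IH _; rewrite mulSn addnC.
by apply: eval_comp2; [apply: eval_proj.. | apply: eval_add].
Qed.

Lemma eval_pred a : eval A B PPred [:: a] a.-1.
Proof.
elim: a => [|a IH]; first by apply: ePrim0; constructor.
by apply: ePrimS IH _; apply: eval_proj.
Qed.

Lemma eval_sub a b : eval A B PSub [:: a; b] (a - b).
Proof.
have subrev c : eval A B PSubRev [:: c; a] (a - c).
  elim: c => [|c IH]; first by apply: ePrim0; apply: eval_proj; rewrite subn0.
  apply: ePrimS IH _; rewrite subnS.
  by apply: eval_comp1; [exact: eval_proj | apply: eval_pred].
by apply: eval_comp2; [apply: eval_proj.. | apply: subrev].
Qed.

End Programs.

Definition evaluates A B (e : prf) (h : nat -> nat) := forall n, eval A B e [:: n] (h n).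

Definition computes (e : prf) (h : nat -> nat) := forall A B, evaluates A B e h.

Lemma evaluates_ext A B e h h' : h =1 h' -> evaluates A B e h -> evaluates A B e h'.
Proof. by move=> Eh He n; rewrite -Eh. Qed.

Lemma evaluates_comp A B f g e h :
  evaluates A B f g -> evaluates A B e h -> evaluates A B (PComp f [:: e]) (g \o h).
Proof. by move=> Hf He n; apply: eval_comp1 (He n) (Hf _). Qed.

Lemma computes_comp f g e h : computes f g -> computes e h -> computes (PComp f [:: e]) (g \o h).
Proof. by move=> Hf He A B; apply: evaluates_comp. Qed.

Definition PNot := PComp PSub [:: POne; PProj 0].
Definition PSquare := PComp PMul [:: PProj 0; PProj 0].
(* The least [m] with [n < (m + 1)^2]. *)
Definition PSqrt :=
  PMin (PComp PSub [:: PComp PSucc [:: PProj 1]; PComp PSquare [:: PComp PSucc [:: PProj 0]]]).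

Definition is_square (n : nat) : bool := Nat.sqrt n * Nat.sqrt n == n.

(* [1 - (n - sqrt(n)^2)] is [1] exactly on squares. *)
Definition PIsSquare := PComp PNot [:: PComp PSub [:: PProj 0; PComp PSquare [:: PSqrt]]].

Lemma computes_not : computes PNot (subn 1).
Proof. by move=> A B n; apply: eval_comp2; [apply: eval_one | exact: eval_proj | apply: eval_sub]. Qed.

Lemma computes_square : computes PSquare (fun n => n * n).
Proof. by move=> A B n; apply: eval_comp2; [apply: eval_proj.. | apply: eval_mul]. Qed.

Lemma computes_sqrt : computes PSqrt Nat.sqrt.
Proof.
move=> A B n.
have Hstep m : eval A B (PComp PSub [:: PComp PSucc [:: PProj 1];
                 PComp PSquare [:: PComp PSucc [:: PProj 0]]]) [:: m; n] (n.+1 - m.+1 * m.+1).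
  apply: eval_comp2; last exact: eval_sub.
    by apply: eval_comp1; [exact: eval_proj | constructor].
  by apply: eval_comp1; [apply: eval_comp1; [exact: eval_proj | constructor] | apply: computes_square].
have [Hlo Hhi] := Nat.sqrt_spec n (Nat.le_0_l n).
constructor.
  have := Hstep (Nat.sqrt n).
  by have -> : n.+1 - (Nat.sqrt n).+1 * (Nat.sqrt n).+1 = 0 by lia.
move=> m Hm; exists (n - m.+1 * m.+1).
have -> : (n - m.+1 * m.+1).+1 = n.+1 - m.+1 * m.+1 by nia.
exact: Hstep.
Qed.

Lemma computes_is_square : computes PIsSquare (fun n => is_square n : nat).
Proof.
move=> A B; apply: (@evaluates_ext _ _ _ (subn 1 \o (fun n => n - Nat.sqrt n * Nat.sqrt n))).
  move=> n /=; have [Hlo Hhi] := Nat.sqrt_spec n (Nat.le_0_l n).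
  by rewrite /is_square; case: eqP => E; lia.
apply: evaluates_comp (computes_not A B) _ => n.
apply: eval_comp2; [exact: eval_proj | | exact: eval_sub].
exact: eval_comp1 (computes_sqrt _ _ _) (computes_square _ _ _).
Qed.

(* Branch on [c n] in [{0, 1}] by primitive recursion: [0] stops at the base case
   [e2], [1] takes one step into [e1]. *)
Definition PIf c e1 e2 := PComp (PPrim e2 (PComp e1 [:: PProj 2])) [:: c; PProj 0].

Lemma evaluates_if A B c e1 e2 (p : pred nat) h1 h2 :
  evaluates A B c (fun n => p n : nat) -> evaluates A B e1 h1 -> evaluates A B e2 h2 ->
  evaluates A B (PIf c e1 e2) (fun n => if p n then h1 n else h2 n).
Proof.
move=> Hc He1 He2 n; apply: eval_comp2 (Hc n) _ _; first exact: eval_proj.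
case: (p n) => /=; last exact: ePrim0.
apply: ePrimS (ePrim0 _ (He2 n)) _.
by apply: eval_comp1; [exact: eval_proj | exact: He1].
Qed.

Definition halts A B e n := exists y, eval A B e [:: n] y.

Definition PHaltIfZero g := PMin (PComp g [:: PProj 1]).

Lemma halts_if_zero A B g n w : eval A B g [:: n] w ->
  halts A B (PHaltIfZero g) n <-> w = 0.
Proof.
move=> Hg; split=> [[y H] | Ew]; last subst w.
  inversion H as [| | | | | | | |f v m Hy Hlt]; subst.
  have [w' [Hp Hw']] := eval_comp1_inv Hy; inversion Hp; subst.
  exact: eval_det Hg Hw'.
exists 0; constructor => //.
by apply: eval_comp1 Hg; apply: eval_proj.
Qed.

(* The search for the least [m] with value [0] stops at [m = 0] when [c n = 0];
   otherwise it can only stop at [m = 1], after running [e] on [n]. *)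
Definition PImpl c e := PMin (PPrim c (PComp PZero [:: PComp e [:: PProj 2]])).

Lemma halts_impl A B c e n w : eval A B c [:: n] w ->
  halts A B (PImpl c e) n <-> w = 0 \/ halts A B e n.
Proof.
move=> Hc.
have step y : eval A B (PPrim c (PComp PZero [:: PComp e [:: PProj 2]])) [:: 1; n] y ->
    halts A B e n.
  move=> H; inversion H as [| | | | | | |b s m v z y' Hb Hs|]; subst.
  have [w' [Hw' _]] := eval_comp1_inv Hs.
  have [u [Hu He]] := eval_comp1_inv Hw'; inversion Hu; subst.
  by exists w'.
split=> [[[|[|y]] H] | ].
- inversion H as [| | | | | | | |f v m H0 _]; subst.
  inversion H0 as [| | | | | |b s v y Hb| |]; subst.
  by left; exact: eval_det Hc Hb.
- inversion H as [| | | | | | | |f v m H1 _]; subst.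
  by right; exact: step H1.
- inversion H as [| | | | | | | |f v m _ Hlt]; subst.
  by have [k /step] := Hlt 1 erefl; right.
case: (eqVneq w 0) Hc => [-> Hc _ | Hw Hc [Ew | [y Hy]]].
- by exists 0; constructor => //; apply: ePrim0.
- by rewrite Ew eqxx in Hw.
- exists 1; constructor.
    apply: ePrimS (ePrim0 _ Hc) _.
    apply: eval_comp1; last by constructor.
    by apply: eval_comp1 Hy; apply: eval_proj.
  case=> // _; exists w.-1; apply: ePrim0; by rewrite prednK ?lt0n.
Qed.

Definition PAnd e1 e2 := PComp PZero [:: e1; e2].

Lemma halts_and A B e1 e2 n :
  halts A B (PAnd e1 e2) n <-> halts A B e1 n /\ halts A B e2 n.
Proof.
split=> [[y /eval_comp2_inv [w1 [w2 [H1 H2 _]]]] | [[y1 H1] [y2 H2]]].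
  by split; [exists w1 | exists w2].
by exists 0; apply: eval_comp2 H1 H2 _; constructor.
Qed.

Lemma Pi11_ext W (S S' : nat -> Prop) : (forall n, S n <-> S' n) -> Pi11 W S -> Pi11 W S'.
Proof. by move=> ES [e He]; exists e => n; rewrite -ES. Qed.

Lemma Pi11_eq0 W e h : (forall B, evaluates (b2n W) B e h) -> Pi11 W (fun n => h n = 0).
Proof.
move=> He; exists (PHaltIfZero e) => n.
split=> [h0 f | /(_ (fun _ => 0))/(halts_if_zero (He _ n)) //].
exact/(halts_if_zero (He f n)).
Qed.

Lemma Pi11_if W c (p : pred nat) S1 S2 : computes c (fun n => p n : nat) ->
  Pi11 W S1 -> Pi11 W S2 -> Pi11 W (fun n => if p n then S1 n else S2 n).
Proof.
move=> Hc [e1 He1] [e2 He2].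
pose e := PAnd (PImpl c e1) (PImpl (PComp PNot [:: c]) e2).
exists e => n.
have He f : halts (b2n W) f e n <->
    if p n then halts (b2n W) f e1 n else halts (b2n W) f e2 n.
  rewrite halts_and (halts_impl e1 (Hc _ f n)).
  rewrite (halts_impl e2 (computes_comp computes_not Hc _ f n)) /=.
  by case: (p n) => /=; intuition.
have -> : (if p n then S1 n else S2 n) <->
    forall f, if p n then halts (b2n W) f e1 n else halts (b2n W) f e2 n.
  by case: (p n); [exact: He1 | exact: He2].
by split=> H f; apply/He; exact: H.
Qed.

(* A reduction valid for every second oracle [B]: this covers [turing_le], where
   [B] is constantly [0], and the [Pi11] normal form, where [B] ranges over all of
   Baire space. *)
Definition uniform_le (X W : cantor) := exists e, forall B, evaluates (b2n W) B e (b2n X).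

Lemma uniform_le_comp X W e f : computes e f -> (forall n, X n = W (f n)) -> uniform_le X W.
Proof.
move=> Hf EX; exists (PComp POrA [:: e]) => B n.
rewrite /b2n EX; apply: eval_comp1 (Hf _ _ n) _; exact: eOrA.
Qed.

Lemma uniform_le_refl X : uniform_le X X.
Proof. by exists POrA => B n; exact: eOrA. Qed.

Lemma uniform_le_turing X W : uniform_le X W -> turing_le X W.
Proof. by case=> e He; exists e; apply: He. Qed.

Lemma uniform_le_hyp X W : uniform_le X W -> hyp_le X W.
Proof.
case=> e He; split.
  apply: Pi11_ext (Pi11_eq0 (fun B => evaluates_comp (computes_not _ B) (He B))) => n /=.
  by rewrite /b2n; case: (X n).
by apply: Pi11_ext (Pi11_eq0 He) => n; rewrite /b2n; case: (X n).
Qed.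

Lemma turing_le_if W Z1 Z2 c (p : pred nat) : computes c (fun n => p n : nat) ->
  turing_le Z1 W -> turing_le Z2 W -> turing_le (fun n => if p n then Z1 n else Z2 n) W.
Proof.
move=> Hc [e1 He1] [e2 He2]; exists (PIf c e1 e2).
by apply: evaluates_ext (evaluates_if (Hc _ _) He1 He2) => n; rewrite /b2n; case: (p n).
Qed.

Lemma hyp_le_if W Z1 Z2 c (p : pred nat) : computes c (fun n => p n : nat) ->
  hyp_le Z1 W -> hyp_le Z2 W -> hyp_le (fun n => if p n then Z1 n else Z2 n) W.
Proof.
move=> Hc [T1 F1] [T2 F2]; split.
  by apply: Pi11_ext (Pi11_if Hc T1 T2) => n; case: (p n).
by apply: Pi11_ext (Pi11_if Hc F1 F2) => n; case: (p n).
Qed.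

Definition square_join (X Y : cantor) : cantor :=
  fun n => if is_square n then X (Nat.sqrt n) else Y n.

Lemma square_join_off_squares X Y n : ~~ is_square n -> square_join X Y n = Y n.
Proof. by rewrite /square_join => /negbTE ->. Qed.

Lemma uniform_le_square_join X Y : uniform_le X (square_join X Y).
Proof.
apply: uniform_le_comp computes_square _ => n.
by rewrite /square_join /is_square Nat.sqrt_square eqxx.
Qed.

Lemma uniform_le_sqrt X : uniform_le (X \o Nat.sqrt) X.
Proof. exact: uniform_le_comp computes_sqrt _. Qed.

Lemma square_join_turing_eq X Y : turing_le Y X -> turing_eq (square_join X Y) X.
Proof.
move=> HY; split; last exact/uniform_le_turing/uniform_le_square_join.
exact: turing_le_if computes_is_square (uniform_le_turing (uniform_le_sqrt X)) HY.
Qed.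

Lemma square_join_hyp_eq X Y : hyp_le Y X -> hyp_eq (square_join X Y) X.
Proof.
move=> HY; split; last exact/uniform_le_hyp/uniform_le_square_join.
exact: hyp_le_if computes_is_square (uniform_le_hyp (uniform_le_sqrt X)) HY.
Qed.

(** * Hausdorff dimension *)

Fixpoint variants (P : pred nat) (i : nat) (s : seq bool) : seq (seq bool) :=
  if s is b :: s' then
    let r := variants P i.+1 s' in
    if P i then map (cons false) r ++ map (cons true) r else map (cons b) r
  else [:: [::]].

Lemma size_variants P s i : size (variants P i s) = 2 ^ count P (iota i (size s)).
Proof.
elim: s i => [|b s IH] i //=.
by case: (P i); rewrite ?size_cat !size_map IH ?add0n // add1n expnS mul2n addnn.
Qed.

Lemma size_mem_variants P s i t : t \in variants P i s -> size t = size s.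
Proof.
elim: s i t => [|b s IH] i t /=; first by rewrite inE => /eqP ->.
case: (P i) => [|/mapP [t' /IH Et ->] /=]; last by rewrite Et.
by rewrite mem_cat => /orP [] /mapP [t' /IH Et ->] /=; rewrite Et.
Qed.

Lemma mem_variants P s i t : size t = size s ->
  (forall j, (j < size s)%N -> ~~ P (i + j) -> nth false t j = nth false s j) ->
  t \in variants P i s.
Proof.
elim: s i t => [|b s IH] i [|x t] //= [Es] Eagree.
have Ht : t \in variants P i.+1 s.
  by apply: IH => // j Hj HP; apply: (Eagree j.+1); rewrite ?addnS.
case HPi: (P i); first by rewrite mem_cat; case: (x); rewrite map_f ?orbT.
have := Eagree 0 erefl; rewrite addn0 HPi => /(_ erefl) /= ->.
exact: map_f.
Qed.

Local Open Scope ring_scope.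
Local Notation R := Rdefinitions.R.

Section RefinedCover.
Variables (P : pred nat) (c : nat -> option (seq bool)).

Definition refine (o : option (seq bool)) : seq (option (seq bool)) :=
  if o is Some s then map Some (variants P 0 s) else [:: None].

Definition refine_prefix M := flatten [seq refine (c i) | i <- iota 0 M].

(* Each [refine (c i)] is nonempty, so [refine_prefix k.+1] has an entry at index [k]. *)
Definition refined_cover k := nth None (refine_prefix k.+1) k.

Lemma refine_prefixD M d :
  refine_prefix (M + d) = refine_prefix M ++ flatten [seq refine (c i) | i <- iota M d].
Proof. by rewrite /refine_prefix iotaD map_cat flatten_cat. Qed.

Lemma leq_size_refine_prefix M : (M <= size (refine_prefix M))%N.
Proof.
elim: M => // M IH; rewrite -addn1 refine_prefixD size_cat /= cats0 addn1.
suff : (0 < size (refine (c M)))%N by lia.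
by case: (c M) => //= s; rewrite size_map size_variants expn_gt0.
Qed.

Lemma refined_coverE M k : (k < size (refine_prefix M))%N ->
  refined_cover k = nth None (refine_prefix M) k.
Proof.
have nth_prefix M1 M2 : (M1 <= M2)%N -> (k < size (refine_prefix M1))%N ->
    nth None (refine_prefix M2) k = nth None (refine_prefix M1) k.
  by move=> /subnKC <- Hk; rewrite refine_prefixD nth_cat Hk.
rewrite /refined_cover => Hk; case: (leqP k.+1 M) => HkM.
  by rewrite (nth_prefix k.+1 M) // (leq_trans _ (leq_size_refine_prefix k.+1)).
by rewrite (nth_prefix M k.+1) // ltnW.
Qed.

Lemma refined_cover_Some k t : refined_cover k = Some t ->
  exists i s, c i = Some s /\ t \in variants P 0 s.
Proof.
rewrite /refined_cover => Ek.
have : Some t \in refine_prefix k.+1.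
  by rewrite -Ek mem_nth //; case: ltnP => // Hk; rewrite nth_default in Ek.
case/flattenP => _ /mapP [i _ ->]; case Ec: (c i) => [s|] //=.
by move=> /mapP [t0 Ht0 [->]]; exists i, s.
Qed.

Lemma refined_cover_onto i s t : c i = Some s -> t \in variants P 0 s ->
  exists k, refined_cover k = Some t.
Proof.
move=> Ec Ht.
have Hin : Some t \in refine_prefix i.+1.
  by rewrite -addn1 refine_prefixD /= cats0 Ec mem_cat map_f ?orbT.
exists (index (Some t) (refine_prefix i.+1)).
by rewrite (@refined_coverE i.+1) ?index_mem // nth_index.
Qed.

Lemma sum_refined_cover (w w' : option (seq bool) -> R) N :
  (forall o, 0 <= w' o) ->
  (forall i, \sum_(o <- refine (c i)) w' o <= w (c i)) ->
  \sum_(k < N) w' (refined_cover k) <= \sum_(i < N) w (c i).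
Proof.
move=> w'_ge0 Hw; set L := refine_prefix N.
have HN := leq_size_refine_prefix N.
rewrite (eq_bigr (fun k : 'I_N => w' (nth None L k))); last first.
  by move=> k _; rewrite (@refined_coverE N) // (leq_trans _ HN).
apply: (@le_trans _ _ (\sum_(k < size L) w' (nth None L k))).
  rewrite (big_ord_widen _ (fun k => w' (nth None L k)) HN).
  rewrite [X in _ <= X](bigID (fun k : 'I_(size L) => (k < N)%N)) /=.
  by rewrite lerDl sumr_ge0.
rewrite -(big_mkord xpredT (fun k => w' (nth None L k))) -(big_nth None xpredT w').
rewrite /L /refine_prefix big_flatten /= big_map.
rewrite -(big_mkord xpredT (fun i => w (c i))) /index_iota subn0.
exact: ler_sum.
Qed.

End RefinedCover.

(* [Hnull s A] unfolds to [forall n eps, 0 < eps -> exists c, small_cover s n eps A c]. *)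
Definition small_cover (s : R) (n : nat) (eps : R) (A : set cantor)
    (c : nat -> option (seq bool)) :=
  (forall i sig, c i = Some sig -> (n <= size sig)%N) /\
  (forall X, A X -> exists i sig, c i = Some sig /\ cyl sig X) /\
  (forall N : nat, \sum_(i < N) cweight s (c i) <= eps).

Definition agree_off (P : pred nat) (A : set cantor) : set cantor :=
  fun Y => exists2 Z, A Z & forall n, ~~ P n -> Y n = Z n.

Lemma cweight_ge0 s o : 0 <= cweight s o.
Proof. by case: o => [sig|] //=; apply: powR_ge0. Qed.

Lemma small_cover_sub s n eps (A A' : set cantor) c :
  (A `<=` A')%classic -> small_cover s n eps A' c -> small_cover s n eps A c.
Proof. by move=> AA' [Hsize [Hcov Hsum]]; split; [|split] => // X /AA' /Hcov. Qed.

Lemma small_cover_refine P s s' n eps A c :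
  small_cover s n eps A c ->
  (forall i sig, c i = Some sig ->
     (2 ^ count P (iota 0 (size sig)))%:R * 2 `^ (- (s' * (size sig)%:R))
       <= 2 `^ (- (s * (size sig)%:R))) ->
  small_cover s' n eps (agree_off P A) (refined_cover P c).
Proof.
move=> [Hsize [Hcov Hsum]] Hw; split; [|split].
- move=> k t /refined_cover_Some [i [sig [Ec Ht]]].
  by rewrite (size_mem_variants Ht); exact: Hsize Ec.
- move=> Y [Z /Hcov [i [sig [Ec HZ]]] EYZ].
  have Ht : mkseq Y (size sig) \in variants P 0 sig.
    apply: mem_variants; first by rewrite size_mkseq.
    by move=> j Hj HPj; rewrite nth_mkseq // EYZ // HZ.
  have [k Hk] := refined_cover_onto Ec Ht.
  by exists k, (mkseq Y (size sig)); split=> // j; rewrite size_mkseq => Hj; rewrite nth_mkseq.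
- move=> N; apply: le_trans (Hsum N); apply: sum_refined_cover => [o|i].
    exact: cweight_ge0.
  case Ec: (c i) => [sig|]; last by rewrite big_seq1.
  rewrite big_map (eq_big_seq (fun=> 2 `^ (- (s' * (size sig)%:R)))); last first.
    by move=> t Ht; rewrite /= (size_mem_variants Ht).
  rewrite big_const_seq iter_addr addr0 count_predT size_variants.
  by have := Hw _ _ Ec; rewrite mulr_natl.
Qed.

Lemma powR_weight_le (k l : nat) (s s' : R) : k%:R <= (s' - s) * l%:R ->
  (2 ^ k)%:R * 2 `^ (- (s' * l%:R)) <= 2 `^ (- (s * l%:R)).
Proof.
move=> Hk; rewrite natrX -powR_mulrn ?ler0n // -powRD; last by rewrite pnatr_eq0 implybT.
by apply: ler_powR; lra.
Qed.

Lemma Hnull_sub s (A A' : set cantor) : (A `<=` A')%classic -> Hnull s A' -> Hnull s A.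
Proof. by move=> AA' HA' n eps /(HA' n) [c Hc]; exists c; exact: small_cover_sub Hc. Qed.

Lemma Hnull_two A : Hnull 2 A.
Proof.
move=> n eps heps.
have [m [hnm hm]] : exists m, (n <= m)%N /\ eps^-1 < 2 ^+ m.
  exists (maxn n (Num.Def.archi_bound eps^-1)); split; first exact: leq_maxl.
  by apply: upper_nthrootP; exact: leq_maxr.
pose c i := if i is 0 then Some (nseq m false) else None.
have Hc : small_cover 1 n eps (cyl (nseq m false)) c.
  split; [|split].
  - by case=> // sig [<-]; rewrite size_nseq.
  - by move=> X HX; exists 0, (nseq m false).
  - case=> [|N]; first by rewrite big_ord0 ltW.
    rewrite big_ord_recl big1 ?addr0 // /= size_nseq mul1r powRN powR_mulrn; last lra.
    by rewrite -[eps]invrK lef_pV2 ?ltW // posrE ?invr_gt0 // exprn_gt0.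
exists (refined_cover predT c); apply: small_cover_sub (small_cover_refine Hc _).
  by move=> X _; exists (fun=> false) => // i _; rewrite nth_nseq if_same.
by move=> i sig _; apply: powR_weight_le; rewrite count_predT size_iota; lra.
Qed.

Definition density_zero (P : pred nat) :=
  forall m, exists L, forall l, (L <= l)%N -> (count P (iota 0 l) * m <= l)%N.

Lemma count_is_square l : (count is_square (iota 0 l) <= Nat.sqrt l + 1)%N.
Proof.
rewrite -size_filter -(size_map Nat.sqrt) -(size_iota 0 (Nat.sqrt l + 1)).
apply: uniq_leq_size.
  rewrite map_inj_in_uniq ?filter_uniq ?iota_uniq // => a b.
  by rewrite !mem_filter /is_square => /andP [/eqP Ea _] /andP [/eqP Eb _] E; rewrite -Ea -Eb E.
move=> x /mapP [a]; rewrite mem_filter mem_iota => /andP [_ /andP [_ Ha]] ->.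
rewrite mem_iota add0n /=; have := Nat.sqrt_le_mono a l; lia.
Qed.

Lemma density_zero_is_square : density_zero is_square.
Proof.
move=> m; exists (2 * m * (2 * m))%N => l Hl.
have := count_is_square l; have [Hlo Hhi] := Nat.sqrt_spec l (Nat.le_0_l l).
have := Nat.sqrt_le_mono _ _ (elimT ssrnat.leP Hl); rewrite Nat.sqrt_square.
set r := Nat.sqrt l in Hlo * => Hr Hcount.
have Hrm : ((r + 1) * m <= r * r)%N by nia.
have : (count is_square (iota 0 l) * m <= (r + 1) * m)%N by rewrite leq_mul2r Hcount orbT.
lia.
Qed.

Lemma Hnull_agree_off P s s' A : density_zero P -> s < s' ->
  Hnull s A -> Hnull s' (agree_off P A).
Proof.
move=> HP hss HA n eps heps.
have hd : 0 < s' - s by rewrite subr_gt0.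
have [m hm] : exists m : nat, 1 <= (s' - s) * m%:R.
  exists (Num.Def.archi_bound (s' - s)^-1).
  have := @archi_boundP R (s' - s)^-1; rewrite invr_ge0 (ltW hd) => /(_ isT) /ltW.
  by move=> /(ler_wpM2l (ltW hd)); rewrite mulfV ?gt_eqF.
have [L HL] := HP m.
have [c [Hsize Hc]] := HA (maxn n L) eps heps.
have Hcover : small_cover s n eps A c.
  by split=> // i sig /Hsize; exact: leq_trans (leq_maxl _ _).
exists (refined_cover P c); apply: small_cover_refine Hcover _ => i sig /Hsize Hl.
apply: powR_weight_le.
have := HL _ (leq_trans (leq_maxr _ _) Hl); rewrite -(ler_nat R) natrM.
have : 0 <= (count P (iota 0 (size sig)))%:R :> R by [].
nra.
Qed.

Lemma dimH_ub A s : 0 <= s -> Hnull s A -> dimH A <= s.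
Proof. by move=> hs HA; apply: ge_inf => //; exists 0 => x []. Qed.

Lemma lb_le_dimH A x : (forall s, 0 <= s -> Hnull s A -> x <= s) -> x <= dimH A.
Proof.
move=> Hx; apply: lb_le_inf => [|s [hs HA]]; last exact: Hx.
by exists 2; split; [lra | exact: Hnull_two].
Qed.

Lemma le_dimH (A A' : set cantor) : (A `<=` A')%classic -> dimH A <= dimH A'.
Proof. by move=> AA'; apply: lb_le_dimH => s hs /(Hnull_sub AA'); exact: dimH_ub. Qed.

Lemma dimH_agree_off P A : density_zero P -> dimH (agree_off P A) <= dimH A.
Proof.
move=> HP; apply: lb_le_dimH => s hs HA; apply/ler_addgt0Pr => e he.
by apply: dimH_ub (Hnull_agree_off HP _ HA); [lra | rewrite ltrDl].
Qed.

Lemma dimH_closures (le : cantor -> cantor -> Prop) (P : pred nat) (A : set cantor) :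
  density_zero P -> (forall X, le X X) ->
  (forall X Y, le Y X -> exists2 Z, le Z X /\ le X Z & forall n, ~~ P n -> Z n = Y n) ->
  closed_under (fun X Y => le X Y /\ le Y X) A ->
  dimH A = dimH (down_closure le A) /\ dimH A <= dimH (up_closure le A).
Proof.
move=> HP le_reflexive merge HA.
have down_agree : (down_closure le A `<=` agree_off P A)%classic.
  move=> Y [X [AX leYX]]; have [Z leZX EZY] := merge X Y leYX.
  by exists Z => [|n /EZY ->]; [exact: HA AX leZX |].
split; last by apply: le_dimH => X AX; exists X.
apply: le_anti; rewrite le_dimH /= => [|X AX]; last by exists X.
exact: le_trans (le_dimH down_agree) (dimH_agree_off A HP).
Qed.

Theorem mainTheorem1 :
  (forall A : set cantor, closed_under turing_eq A ->
     dimH A = dimH (down_closure turing_le A) /\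
     dimH A <= dimH (up_closure turing_le A)) /\
  (forall A : set cantor, closed_under hyp_eq A ->
     dimH A = dimH (down_closure hyp_le A) /\
     dimH A <= dimH (up_closure hyp_le A)).
Proof.
split=> A HA; apply: dimH_closures density_zero_is_square _ _ HA.
- by move=> X; exact/uniform_le_turing/uniform_le_refl.
- move=> X Y HY; exists (square_join X Y); first exact: square_join_turing_eq.
  by move=> n /(square_join_off_squares X).
- by move=> X; exact/uniform_le_hyp/uniform_le_refl.
- move=> X Y HY; exists (square_join X Y); first exact: square_join_hyp_eq.
  by move=> n /(square_join_off_squares X).
Qed.
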